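(* Consider $n$ independent Bernoulli trials, each succeeding with probability $p$, and let $X$ be the number of successes. If $p\ge 1/2$, then $\Pr(X\ge n/2)\ge p$. *)

From HB Require Import structures.
From mathcomp Require Import all_boot all_order all_algebra.
Set Implicit Arguments. Unset Strict Implicit. Unset Printing Implicit Defensive.
Import Order.TTheory GRing.Theory Num.Theory.
Local Open Scope ring_scope.

(* Outcome space of n trials: w i = true iff trial i succeeds.
   Probability of a single outcome under independence: product of the
   per-trial probabilities (p for success, 1 - p for failure). *)
Definition trial_weight (R : numDomainType) (n : nat) (p : R)
  (w : {ffun 'I_n -> bool}) : R :=
  \prod_(i < n) (if w i then p else 1 - p).

Definition trials_prob (R : numDomainType) (n : nat) (p : R)
  (A : pred {ffun 'I_n -> bool}) : R :=
  \sum_(w | A w) trial_weight p w.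

Definition num_successes (n : nat) (w : {ffun 'I_n -> bool}) : nat :=
  #|[set i | w i]|.

(** Complementing every trial is an involution on outcomes that maps each
    outcome with fewer than [n/2] successes to one with more than [n/2], and
    for [p >= 1/2] it does so while multiplying the weight by at least
    [p / (1 - p)].  Hence [p * Pr(X < n/2) <= (1 - p) * Pr(X >= n/2)], and
    adding [p * Pr(X >= n/2)] to both sides gives [p <= Pr(X >= n/2)]. *)
From HB Require Import structures.
From mathcomp Require Import all_boot all_order all_algebra.
From mathcomp Require Import zify lra.
Import Order.TTheory GRing.Theory Num.Theory.
Local Open Scope ring_scope.

Lemma ler_natr_half (R : numFieldType) (m k : nat) :
  (m%:R / 2 <= k%:R :> R) = (m <= k.*2)%N.
Proof. by rewrite ler_pdivrMr ?ltr0n // -natrM ler_nat muln2. Qed.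

Lemma ler_expr_swap (R : realDomainType) (x y : R) (a b : nat) :
  0 <= y <= x -> (a <= b)%N -> x ^+ a * y ^+ b <= x ^+ b * y ^+ a.
Proof.
move=> /andP[y0 yx] /subnKC <-.
have x0 : 0 <= x := le_trans y0 yx.
rewrite !exprD mulrA [leRHS]mulrAC ler_wpM2l ?mulr_ge0 ?exprn_ge0 //.
by rewrite lerXn2r // nnegrE.
Qed.

Lemma ler_sum_predC_involution (T : finType) (R : numDomainType)
    (f : T -> T) (A : pred T) (F G : T -> R) :
  involutive f -> (forall x, 0 <= G x) ->
  (forall x, ~~ A x -> A (f x) /\ F x <= G (f x)) ->
  \sum_(x | ~~ A x) F x <= \sum_(x | A x) G x.
Proof.
move=> fK G0 hA.
apply: le_trans (_ : \sum_(x | ~~ A x) G (f x) <= _).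
  by apply: ler_sum => x /hA[].
rewrite (reindex_inj (can_inj fK)) /=.
rewrite (eq_big (fun x => A x && ~~ A (f x)) G); first last.
- by move=> x _; rewrite fK.
- move=> x; case: (boolP (A (f x))) => [_|nAfx]; first by rewrite andbF.
  by have [+ _] := hA _ nAfx; rewrite fK => ->.
rewrite [leRHS](bigID (fun x => A (f x))) /= lerDr.
by apply: sumr_ge0.
Qed.

Section BernoulliTrials.
Variable n : nat.
Implicit Types w : {ffun 'I_n -> bool}.

Definition flip_trials w : {ffun 'I_n -> bool} := [ffun i => ~~ w i].

Lemma flip_trialsK : involutive flip_trials.
Proof. by move=> w; apply/ffunP => i; rewrite !ffunE negbK. Qed.

Lemma num_successes_flip w :
  num_successes (flip_trials w) = (n - num_successes w)%N.
Proof.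
rewrite /num_successes; have := cardsC [set i | w i].
rewrite card_ord => total; rewrite -[X in _ = (X - _)%N]total addKn.
by apply: eq_card => i; rewrite !inE ffunE.
Qed.

Lemma trial_weightE (R : numDomainType) (p : R) w :
  trial_weight p w = p ^+ num_successes w * (1 - p) ^+ (n - num_successes w).
Proof.
rewrite -num_successes_flip /trial_weight (bigID (fun i => w i)) /=.
rewrite (eq_bigr (fun=> p)) => [|i -> //].
rewrite [X in _ * X](eq_bigr (fun=> 1 - p)) => [|i /negbTE -> //].
rewrite !prodr_const /num_successes.
by congr (_ ^+ _ * _ ^+ _); apply: eq_card => i; rewrite !inE ?ffunE.
Qed.

Lemma sum_trial_weight (R : numDomainType) (p : R) :
  \sum_(w : {ffun 'I_n -> bool}) trial_weight p w = 1.
Proof.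
rewrite /trial_weight.
rewrite -(bigA_distr_bigA (fun (i : 'I_n) (b : bool) => if b then p else 1 - p)) /=.
by apply: big1 => i _; rewrite big_bool /= addrC subrK.
Qed.

Lemma trial_weight_ge0 (R : numDomainType) (p : R) w :
  0 <= p <= 1 -> 0 <= trial_weight p w.
Proof.
case/andP=> p0 p1; apply: prodr_ge0 => i _.
by case: (w i); rewrite ?subr_ge0.
Qed.

Lemma trial_weight_flip (R : realDomainType) (p : R) w :
  1 - p <= p <= 1 -> ((num_successes w).*2 < n)%N ->
  p * trial_weight p w <= (1 - p) * trial_weight p (flip_trials w).
Proof.
case/andP=> qp p1 lt_2k_n; rewrite !trial_weightE num_successes_flip.
set k := num_successes w in lt_2k_n *.
have le_kn : (k <= n)%N by lia.
rewrite subKn // mulrA -exprS mulrCA -exprS.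
apply: ler_expr_swap; [by rewrite subr_ge0 p1 qp | lia].
Qed.

End BernoulliTrials.

Theorem lemma8 (R : realFieldType) (n : nat) (p : R) :
  1 / 2 <= p -> p <= 1 ->
  trials_prob p (fun w : {ffun 'I_n -> bool} =>
                   n%:R / 2 <= (num_successes w)%:R :> R) >= p.
Proof.
move=> p_ge_half p_le1.
set A := fun w : {ffun 'I_n -> bool} => _.
have total : trials_prob p A + \sum_(w | ~~ A w) trial_weight p w = 1.
  by rewrite -(sum_trial_weight n _ p) [RHS](bigID A).
have flip : p * \sum_(w | ~~ A w) trial_weight p w <= (1 - p) * trials_prob p A.
  rewrite !mulr_sumr; apply: ler_sum_predC_involution (@flip_trialsK n) _ _.
    by move=> w; rewrite mulr_ge0 ?subr_ge0 ?trial_weight_ge0 ?p_le1 //; lra.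
  move=> w; rewrite /A !ler_natr_half num_successes_flip -ltnNge => lt_2k_n.
  split; first lia.
  by rewrite trial_weight_flip // p_le1 andbT; lra.
by rewrite -[p in p <= _]mulr1 -total mulrDr; lra.
Qed.
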